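(* Let $\omega:[I^-,I^+]\to\mathbb{R}$ be $C^1$ with $\omega'(I)>0$ for all $I\in[I^-,I^+]$, let $T(I,\theta)=(I,\theta+\omega(I))$ on $[I^-,I^+]\times\mathbb{T}$, and let $T_\epsilon:[I^-,I^+]\times\mathbb{T}\to\mathbb{R}\times\mathbb{T}$ be a family of maps with $\|T_\epsilon-T\|_{C^1}\le C\epsilon$ for a constant $C$ independent of $\epsilon$. Let $\gamma_1=\{(I,f(I)):I\in(I_1,I_2)\}$ and $\gamma_2=\{(I,g(I)):I\in(I_1,I_2)\}$ be $C^1$ graphs over the same interval $(I_1,I_2)\subset[I^-,I^+]$, let $x_1\in\gamma_1$ and $\delta>0$. Then there exist $\epsilon_0>0$, $N\in\mathbb{N}$, $x_2\in\gamma_2$ and $\delta'>0$ such that for all $\epsilon\in(0,\epsilon_0)$, $T_\epsilon^N(B_\delta(x_1))\supset B_{\delta'}(x_2)$ (where $T_\epsilon^N$ is well defined on $B_\delta(x_1)$).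
   Context: $\mathbb{T}=\mathbb{R}/\mathbb{Z}$; $B_r(x)$ denotes the open ball of radius $r$ centred at $x$. *)

From Stdlib Require Import Reals ZArith.
From Coquelicot Require Import Coquelicot.
Open Scope R_scope.

(* Everything is expressed on the universal cover R x R of the cylinder
   R x T (T = R/Z): a point (I, theta) of R x R represents (I, theta mod 1). *)

Definition pdI (F : R -> R -> R) (I t : R) : R := Derive (fun a => F a t) I.
Definition pdT (F : R -> R -> R) (I t : R) : R := Derive (fun s => F I s) t.

Definition C1_real (h : R -> R) : Prop :=
  forall x, ex_derive h x /\ continuous (Derive h) x.

Definition C1_on_open (lo hi : R) (h : R -> R) : Prop :=
  forall x, lo < x < hi -> ex_derive h x /\ continuous (Derive h) x.

Definition C1_plane (F : R -> R -> R) : Prop :=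
  forall I t,
    ex_derive (fun a => F a t) I /\ ex_derive (fun s => F I s) t /\
    continuous (fun p : R * R => pdI F (fst p) (snd p)) (I, t) /\
    continuous (fun p : R * R => pdT F (fst p) (snd p)) (I, t).

(* Open ball of radius r in the cylinder R x T (Euclidean product metric,
   quotient distance on T), lifted to the cover: y is in B_r(x) iff some
   integer translate of y in theta is at Euclidean distance < r from x. *)
Definition in_cyl_ball (x : R * R) (r : R) (y : R * R) : Prop :=
  exists k : Z, (fst y - fst x) ^ 2 + (snd y - snd x - IZR k) ^ 2 < r ^ 2.

Definition cmap (F G : R -> R -> R) (p : R * R) : R * R :=
  (F (fst p) (snd p), G (fst p) (snd p)).
Definition citer (F G : R -> R -> R) (n : nat) (p : R * R) : R * R :=
  Nat.iter n (cmap F G) p.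

From Stdlib Require Import Reals Lra Lia.
From Coquelicot Require Import Coquelicot.
Open Scope R_scope.

(* Since [T_eps] is [C^1]-close to the twist map, every point [(u, v)] has a
   [T_eps]-preimage within [O(eps)] of [(u, v - om u)]; iterating backwards [N]
   times, a box of size [rho / (2 (1 + L))^N] around [(b, c)] is covered by
   [T_eps^N]-images of points [rho]-close to [(b, c - N om b)], uniformly in
   small [eps].  By the twist condition [om' > 0], for [N] large the function
   [g - N om] meets [f a + Z] at some [b] close to [a]; taking [c = g b] puts
   the preimages within [delta] of [(a, f a)] on the cylinder. *)

Lemma ex_derive_continuity_pt (h : R -> R) x : ex_derive h x -> continuity_pt h x.
Proof. intro H. apply continuity_pt_filterlim. exact (ex_derive_continuous h x H). Qed.

Lemma is_derive_minus_id (h : R -> R) x l :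
  is_derive h x l -> is_derive (fun y => h y - y) x (l - 1).
Proof.
  intro H. apply (is_derive_minus h (fun y => y) x l 1 H).
  apply is_derive_Reals, derivable_pt_lim_id.
Qed.

Lemma MVT_Rabs_le (h dh : R -> R) (x y M : R) :
  (forall c, Rmin x y <= c <= Rmax x y -> is_derive h c (dh c) /\ Rabs (dh c) <= M) ->
  Rabs (h x - h y) <= M * Rabs (x - y).
Proof.
  intro H.
  assert (Hxy : forall c, Rmin y x <= c <= Rmax y x -> Rmin x y <= c <= Rmax x y)
    by (intros c; rewrite Rmin_comm, Rmax_comm; auto).
  destruct (MVT_gen h y x dh) as [c [Hc ->]].
  - intros z Hz. apply H, Hxy. lra.
  - intros z Hz. apply ex_derive_continuity_pt. exists (dh z). apply H, Hxy, Hz.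
  - rewrite Rabs_mult, (Rabs_minus_sym x y).
    apply Rmult_le_compat_r; [apply Rabs_pos | apply H, Hxy, Hc].
Qed.

Lemma lipschitz_continuity_pt (h : R -> R) M :
  (forall x y, Rabs (h x - h y) <= M * Rabs (x - y)) -> forall x, continuity_pt h x.
Proof.
  intros H x eps Heps.
  assert (HM : 0 < Rabs M + 1) by (pose proof (Rabs_pos M); lra).
  exists (eps / (Rabs M + 1)). split; [apply Rdiv_lt_0_compat; lra|].
  intros y [_ Hy]. simpl in *. unfold R_dist in *.
  apply Rle_lt_trans with ((Rabs M + 1) * Rabs (y - x)).
  - eapply Rle_trans; [apply H|]. apply Rmult_le_compat_r; [apply Rabs_pos|].
    pose proof (Rle_abs M). lra.
  - apply Rlt_div_r in Hy; [lra | exact HM].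
Qed.

Lemma between_in_segment lo hi x y c :
  lo <= x <= hi -> lo <= y <= hi -> Rmin x y <= c <= Rmax x y -> lo <= c <= hi.
Proof. unfold Rmin, Rmax. destruct Rle_dec; lra. Qed.

Lemma Derive_bounded_on_segment (h : R -> R) lo hi :
  C1_real h -> lo <= hi ->
  exists L, 0 <= L /\ forall x, lo <= x <= hi -> Rabs (Derive h x) <= L.
Proof.
  intros Hh Hlh.
  destruct (continuity_ab_maj (fun x => Rabs (Derive h x)) lo hi Hlh) as [x0 [Hx0 _]].
  { intros c _. apply (continuity_pt_comp (Derive h) Rabs).
    - apply continuity_pt_filterlim, Hh.
    - apply Rcontinuity_abs. }
  exists (Rabs (Derive h x0)). split; [apply Rabs_pos | exact Hx0].
Qed.

Lemma in_cyl_ball_coords (x : R * R) r y : 0 < r -> in_cyl_ball x r y ->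
  exists k : Z, Rabs (fst y - fst x) <= r /\ Rabs (snd y - snd x - IZR k) <= r.
Proof.
  intros Hr [k Hk]. exists k.
  pose proof (pow2_ge_0 (fst y - fst x)). pose proof (pow2_ge_0 (snd y - snd x - IZR k)).
  split; apply Rabs_le_between; split; nra.
Qed.

Lemma C1_plane_partials (H : R -> R -> R) : C1_plane H ->
  forall I t, ex_derive (fun a => H a t) I /\ ex_derive (fun s => H I s) t.
Proof. intros HH I t. destruct (HH I t) as (H1 & H2 & _). split; assumption. Qed.

Section PerturbedTwistMap.

Variables (Im Ip L ce : R) (om : R -> R) (F G : R -> R -> R).

Hypothesis om_derivable : forall x, ex_derive om x.
Hypothesis Derive_om_bound : forall x, Im <= x <= Ip -> Rabs (Derive om x) <= L.
Hypothesis F_partials :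
  forall I t, ex_derive (fun a => F a t) I /\ ex_derive (fun s => F I s) t.
Hypothesis G_partials :
  forall I t, ex_derive (fun a => G a t) I /\ ex_derive (fun s => G I s) t.
Hypothesis ce_nonneg : 0 <= ce.
Hypothesis ce_le_half : ce <= 1/2.
Hypothesis L_nonneg : 0 <= L.
Hypothesis C1_close : forall I t, Im <= I <= Ip ->
  Rabs (F I t - I) <= ce /\
  Rabs (G I t - (t + om I)) <= ce /\
  Rabs (pdI F I t - 1) <= ce /\
  Rabs (pdT F I t) <= ce /\
  Rabs (pdI G I t - Derive om I) <= ce /\
  Rabs (pdT G I t - 1) <= ce.

Lemma om_lipschitz x y : Im <= x <= Ip -> Im <= y <= Ip ->
  Rabs (om x - om y) <= L * Rabs (x - y).
Proof.
  intros Hx Hy. apply (MVT_Rabs_le om (Derive om)). intros c Hc. split.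
  - apply Derive_correct, om_derivable.
  - apply Derive_om_bound, (between_in_segment _ _ x y); assumption.
Qed.

Lemma F_near_id_in_I I I' t : Im <= I <= Ip -> Im <= I' <= Ip ->
  Rabs (F I t - F I' t - (I - I')) <= ce * Rabs (I - I').
Proof.
  intros HI HI'.
  replace (F I t - F I' t - (I - I')) with (F I t - I - (F I' t - I')) by ring.
  apply (MVT_Rabs_le (fun a => F a t - a) (fun a => pdI F a t - 1)).
  intros c Hc. split.
  - apply is_derive_minus_id. unfold pdI. apply Derive_correct, (proj1 (F_partials c t)).
  - apply C1_close, (between_in_segment _ _ I I'); assumption.
Qed.

Lemma F_lipschitz_in_t I t t' : Im <= I <= Ip ->
  Rabs (F I t - F I t') <= ce * Rabs (t - t').
Proof.
  intro HI. apply (MVT_Rabs_le (fun s => F I s) (fun s => pdT F I s)).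
  intros c _. split.
  - unfold pdT. apply Derive_correct, (proj2 (F_partials I c)).
  - apply C1_close, HI.
Qed.

Lemma G_near_id_in_t I t t' : Im <= I <= Ip ->
  Rabs (G I t - G I t' - (t - t')) <= ce * Rabs (t - t').
Proof.
  intro HI.
  replace (G I t - G I t' - (t - t')) with (G I t - t - (G I t' - t')) by ring.
  apply (MVT_Rabs_le (fun s => G I s - s) (fun s => pdT G I s - 1)).
  intros c _. split.
  - apply is_derive_minus_id. unfold pdT. apply Derive_correct, (proj2 (G_partials I c)).
  - apply C1_close, HI.
Qed.

Lemma G_lipschitz_in_I I I' t : Im <= I <= Ip -> Im <= I' <= Ip ->
  Rabs (G I t - G I' t) <= (L + ce) * Rabs (I - I').
Proof.
  intros HI HI'. apply (MVT_Rabs_le (fun a => G a t) (fun a => pdI G a t)).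
  intros c Hc. split; [unfold pdI; apply Derive_correct, (proj1 (G_partials c t))|].
  assert (Hc' : Im <= c <= Ip) by (apply (between_in_segment _ _ I I'); assumption).
  destruct (C1_close c t Hc') as (_ & _ & _ & _ & Hd & _).
  pose proof (Derive_om_bound c Hc') as HL.
  apply Rabs_le_between in Hd. apply Rabs_le_between in HL. apply Rabs_le_between. lra.
Qed.

Lemma F_level_curve u m : ce < m -> Im <= u - m -> u + m <= Ip ->
  exists J : R -> R, forall t,
    F (J t) t = u /\ Rabs (J t - u) <= ce /\
    forall t', Rabs (J t - J t') <= Rabs (t - t').
Proof.
  intros Hm Hlo Hhi.
  assert (root : forall t, {I | u - m <= I <= u + m /\ F I t - u = 0}).
  { intro t. apply (Ranalysis5.IVT_interv (fun a => F a t - u)); [|lra| |].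
    - intros a _. apply continuity_pt_minus.
      + apply ex_derive_continuity_pt, (proj1 (F_partials a t)).
      + apply continuity_pt_const. intros ? ?; reflexivity.
    - destruct (C1_close (u - m) t ltac:(lra)) as [H _]. apply Rabs_le_between in H. lra.
    - destruct (C1_close (u + m) t ltac:(lra)) as [H _]. apply Rabs_le_between in H. lra. }
  set (J := fun t => proj1_sig (root t)).
  assert (HJ : forall t, Im <= J t <= Ip /\ F (J t) t = u).
  { intro t. destruct (proj2_sig (root t)). unfold J. lra. }
  exists J. intro t. destruct (HJ t) as [HJt FJt]. split; [exact FJt|]. split.
  - destruct (C1_close (J t) t HJt) as [H _]. rewrite FJt, Rabs_minus_sym in H. exact H.
  - intro t'. destruct (HJ t') as [HJt' FJt'].
    pose proof (F_near_id_in_I (J t) (J t') t HJt HJt') as HI.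
    pose proof (F_lipschitz_in_t (J t') t t' HJt') as Ht.
    rewrite FJt in HI. rewrite FJt' in Ht.
    set (A := Rabs (J t - J t')) in *. set (B := Rabs (t - t')) in *.
    (* [F (J t) t = u = F (J t') t']; compare both with [F (J t') t]. *)
    assert (HA : A <= ce * A + ce * B).
    { unfold A.
      replace (J t - J t') with (- (u - F (J t') t - (J t - J t')) + (u - F (J t') t)) at 1 by ring.
      eapply Rle_trans; [apply Rabs_triang|].
      rewrite Rabs_Ropp, (Rabs_minus_sym u). fold A. lra. }
    assert (0 <= A) by apply Rabs_pos. assert (0 <= B) by apply Rabs_pos. nra.
Qed.

Lemma cmap_preimage u v m : ce < m -> Im <= u - m -> u + m <= Ip ->
  exists I t, cmap F G (I, t) = (u, v) /\
    Rabs (I - u) <= ce /\ Rabs (t - (v - om u)) <= (1 + L) * ce.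
Proof.
  intros Hm Hlo Hhi.
  destruct (F_level_curve u m Hm Hlo Hhi) as [J HJ].
  assert (HJI : forall t, Im <= J t <= Ip).
  { intro t. destruct (HJ t) as (_ & H & _). apply Rabs_le_between' in H. lra. }
  set (phi := fun t => G (J t) t - v).
  assert (phi_lipschitz : forall t t', Rabs (phi t - phi t') <= (L + 2) * Rabs (t - t')).
  { intros t t'. unfold phi.
    pose proof (G_lipschitz_in_I (J t) (J t') t (HJI t) (HJI t')) as H1.
    pose proof (G_near_id_in_t (J t') t t' (HJI t')) as H2.
    destruct (HJ t) as (_ & _ & H3). specialize (H3 t').
    replace (G (J t) t - v - (G (J t') t' - v)) with
      ((G (J t) t - G (J t') t) + (G (J t') t - G (J t') t' - (t - t')) + (t - t')) by ring.
    eapply Rle_trans; [apply Rabs_triang|].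
    eapply Rle_trans; [apply Rplus_le_compat_r, Rabs_triang|].
    assert (0 <= Rabs (t - t')) by apply Rabs_pos.
    assert ((L + ce) * Rabs (J t - J t') <= (L + ce) * Rabs (t - t'))
      by (apply Rmult_le_compat_l; lra).
    nra. }
  assert (phi_near : forall t, Rabs (phi t - (t + om u - v)) <= (1 + L) * ce).
  { intro t. unfold phi.
    destruct (C1_close (J t) t (HJI t)) as [_ [H1 _]].
    pose proof (om_lipschitz (J t) u (HJI t) ltac:(lra)) as H2.
    destruct (HJ t) as (_ & H3 & _).
    replace (G (J t) t - v - (t + om u - v))
      with ((G (J t) t - (t + om (J t))) + (om (J t) - om u)) by ring.
    eapply Rle_trans; [apply Rabs_triang|].
    assert (L * Rabs (J t - u) <= L * ce) by (apply Rmult_le_compat_l; lra).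
    lra. }
  set (K := (1 + L) * ce).
  assert (HK : 0 <= K) by (unfold K; nra).
  destruct (Ranalysis5.IVT_interv phi (v - om u - K - 1) (v - om u + K + 1))
    as [t0 [_ Hphi0]].
  - intros t _. apply (lipschitz_continuity_pt phi (L + 2) phi_lipschitz).
  - lra.
  - pose proof (phi_near (v - om u - K - 1)) as H. apply Rabs_le_between in H. fold K in H. lra.
  - pose proof (phi_near (v - om u + K + 1)) as H. apply Rabs_le_between in H. fold K in H. lra.
  - exists (J t0), t0. destruct (HJ t0) as (FJ & HJu & _).
    pose proof (phi_near t0) as H. rewrite Hphi0 in H.
    unfold cmap; simpl. rewrite FJ. unfold phi in Hphi0.
    replace (G (J t0) t0) with v by lra.
    split; [reflexivity|]. split; [exact HJu|].
    replace (t0 - (v - om u)) with (- (0 - (t0 + om u - v))) by ring.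
    rewrite Rabs_Ropp. exact H.
Qed.

(* One backward step enlarges the error box by the factor [2 (1 + L)]: the
   preimage is [ce]-close to the inverse of the unperturbed twist map, and
   [om] varies by at most [L d] across the box. *)
Lemma citer_preimage b rho : 0 < rho -> Im <= b - 3 * rho -> b + 3 * rho <= Ip ->
  forall n d c w, ce <= d -> (2 * (1 + L)) ^ n * d <= rho ->
  Rabs (fst w - b) <= d -> Rabs (snd w - c) <= d ->
  exists z, citer F G n z = w /\
    Rabs (fst z - b) <= (2 * (1 + L)) ^ n * d /\
    Rabs (snd z - (c - INR n * om b)) <= (2 * (1 + L)) ^ n * d /\
    forall j, (j <= n)%nat -> Rabs (fst (citer F G j z) - b) <= rho.
Proof.
  intros Hrho Hlo Hhi.
  set (Kc := 2 * (1 + L)).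
  induction n as [|n IH]; intros d c w Hd Hdrho Hw1 Hw2.
  - exists w. simpl in *. rewrite Rmult_1_l, Rmult_0_l, Rminus_0_r.
    split; [reflexivity|]. split; [exact Hw1|]. split; [exact Hw2|].
    intros j Hj. replace j with 0%nat by lia. simpl. lra.
  - assert (HKn : 1 <= Kc ^ n) by (apply pow_R1_Rle; unfold Kc; lra).
    assert (HKSn : Kc ^ S n * d = Kc ^ n * (Kc * d)) by (simpl; ring).
    assert (Hdrho' : d <= rho).
    { assert (d <= Kc * d) by (unfold Kc; nra). nra. }
    apply Rabs_le_between in Hw1. apply Rabs_le_between in Hw2.
    destruct (cmap_preimage (fst w) (snd w) (2 * rho)) as (I & t & Hw & HI & Ht); try lra.
    assert (Hom : Rabs (om (fst w) - om b) <= L * d).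
    { eapply Rle_trans; [apply om_lipschitz; lra|].
      apply Rmult_le_compat_l; [lra | apply Rabs_le_between; lra]. }
    apply Rabs_le_between in HI. apply Rabs_le_between in Ht. apply Rabs_le_between in Hom.
    destruct (IH (Kc * d) (c - om b) (I, t)) as (z & Hz & Hz1 & Hz2 & Horbit).
    + unfold Kc. nra.
    + rewrite <- HKSn. exact Hdrho.
    + simpl. apply Rabs_le_between. unfold Kc. nra.
    + simpl. apply Rabs_le_between. unfold Kc. nra.
    + exists z. rewrite HKSn, S_INR.
      assert (Hstep : citer F G (S n) z = w)
        by (change (cmap F G (citer F G n z) = w); rewrite Hz, Hw; destruct w; reflexivity).
      split; [exact Hstep|]. split; [exact Hz1|]. split.
      * replace (c - (INR n + 1) * om b) with (c - om b - INR n * om b) by ring. exact Hz2.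
      * intros j Hj. destruct (Nat.eq_dec j (S n)) as [->|Hne]; [|apply Horbit; lia].
        rewrite Hstep. apply Rabs_le_between. lra.
Qed.

Lemma citer_covers_cyl_ball b rho n c y :
  0 < rho -> Im <= b - 3 * rho -> b + 3 * rho <= Ip ->
  ce <= rho / (2 * (1 + L)) ^ n ->
  in_cyl_ball (b, c) (rho / (2 * (1 + L)) ^ n) y ->
  exists z (k : Z), citer F G n z = y /\
    Rabs (fst z - b) <= rho /\ Rabs (snd z - (c + IZR k - INR n * om b)) <= rho /\
    forall j, (j <= n)%nat -> Im <= fst (citer F G j z) <= Ip.
Proof.
  intros Hrho Hlo Hhi Hce Hy.
  assert (HK : 0 < (2 * (1 + L)) ^ n) by (apply pow_lt; lra).
  assert (Hbox : (2 * (1 + L)) ^ n * (rho / (2 * (1 + L)) ^ n) = rho) by (field; lra).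
  destruct (in_cyl_ball_coords _ _ _ (Rdiv_lt_0_compat _ _ Hrho HK) Hy) as (k & Hy1 & Hy2).
  simpl in Hy1, Hy2. replace (snd y - c - IZR k) with (snd y - (c + IZR k)) in Hy2 by ring.
  destruct (citer_preimage b rho Hrho Hlo Hhi n _ (c + IZR k) y Hce (Req_le _ _ Hbox) Hy1 Hy2)
    as (z & Hz & Hz1 & Hz2 & Horbit).
  rewrite Hbox in Hz1, Hz2.
  exists z, k. split; [exact Hz|]. split; [exact Hz1|]. split; [exact Hz2|].
  intros j Hj. specialize (Horbit j Hj). apply Rabs_le_between' in Horbit. lra.
Qed.

End PerturbedTwistMap.

(* For [N] large, [g - N om] drops by more than [1] across [[a, a']], so it
   takes a value in [s + Z]. *)
Lemma resonant_point (om g : R -> R) (a a' s : R) :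
  a < a' -> om a < om a' ->
  (forall x, a <= x <= a' -> continuity_pt om x /\ continuity_pt g x) ->
  exists (N : nat) (b : R) (n : Z), a <= b <= a' /\ g b - INR N * om b = s + IZR n.
Proof.
  intros Haa' Hom Hcont.
  set (c := om a' - om a).
  destruct (INR_unbounded ((Rabs (g a' - g a) + 2) / c)) as [N HN].
  assert (HNc : Rabs (g a' - g a) + 2 <= INR N * c).
  { assert (Hq : (Rabs (g a' - g a) + 2) / c * c = Rabs (g a' - g a) + 2)
      by (field; unfold c; lra).
    unfold c in *. nra. }
  set (h := fun x => g x - INR N * om x).
  destruct (archimed (h a' - s)) as [Hup1 Hup2].
  set (n := up (h a' - s)) in *.
  pose proof (Rle_abs (g a' - g a)).
  destruct (Ranalysis5.IVT_interv (fun x => s + IZR n - h x) a a') as [b [Hb Hhb]].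
  - intros x Hx. destruct (Hcont x Hx) as [Hom_x Hg_x]. unfold h.
    apply continuity_pt_minus; [apply continuity_pt_const; intros ? ?; reflexivity|].
    apply continuity_pt_minus; [exact Hg_x | apply continuity_pt_scal, Hom_x].
  - exact Haa'.
  - unfold h, c in *. lra.
  - lra.
  - exists N, b, n. split; [exact Hb|]. unfold h in Hhb. lra.
Qed.

Lemma margin_radius (lo hi b r : R) : lo < b < hi -> 0 < r ->
  exists rho, 0 < rho /\ rho <= r /\ lo <= b - 3 * rho /\ b + 3 * rho <= hi.
Proof.
  intros Hb Hr. exists (Rmin r (Rmin ((b - lo) / 3) ((hi - b) / 3))).
  unfold Rmin. repeat destruct Rle_dec; lra.
Qed.

Lemma coords_in_cyl_ball (x : R * R) r y (k : Z) : 0 < r ->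
  Rabs (fst y - fst x) <= r / 2 -> Rabs (snd y - snd x - IZR k) <= r / 2 ->
  in_cyl_ball x r y.
Proof.
  intros Hr H1 H2. exists k.
  apply Rabs_le_between in H1. apply Rabs_le_between in H2. nra.
Qed.

Theorem mainTheorem10
  (Im Ip : R) (om : R -> R)
  (F G : R -> R -> R -> R) (C : R)
  (I1 I2 : R) (f g : R -> R) (a delta : R) :
  C1_real om ->
  (forall I, Im <= I <= Ip -> 0 < Derive om I) ->
  (forall e, 0 < e ->
     C1_plane (F e) /\ C1_plane (G e) /\
     (forall I t, F e I (t + 1) = F e I t /\ G e I (t + 1) = G e I t + 1)) ->
  (forall e, 0 < e -> forall I t, Im <= I <= Ip ->
     Rabs (F e I t - I) <= C * e /\
     Rabs (G e I t - (t + om I)) <= C * e /\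
     Rabs (pdI (F e) I t - 1) <= C * e /\
     Rabs (pdT (F e) I t) <= C * e /\
     Rabs (pdI (G e) I t - Derive om I) <= C * e /\
     Rabs (pdT (G e) I t - 1) <= C * e) ->
  Im <= I1 -> I1 < I2 -> I2 <= Ip ->
  C1_on_open I1 I2 f -> C1_on_open I1 I2 g ->
  I1 < a < I2 -> 0 < delta ->
  exists eps0 : R, 0 < eps0 /\
  exists N : nat, exists b : R, I1 < b < I2 /\
  exists delta' : R, 0 < delta' /\
  forall e, 0 < e < eps0 ->
    forall y, in_cyl_ball (b, g b) delta' y ->
      exists z : R * R, exists k : Z,
        in_cyl_ball (a, f a) delta z /\
        (forall j : nat, (j < N)%nat ->
           Im <= fst (citer (F e) (G e) j z) <= Ip) /\
        citer (F e) (G e) N z = (fst y, snd y + IZR k).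
Proof.
  intros Hom Hom_pos HT Hclose HI1 HI12 HI2 _ Hg Ha Hdelta.
  assert (HC : 0 <= C).
  { destruct (Hclose 1 Rlt_0_1 Im 0 ltac:(lra)) as [H _].
    pose proof (Rabs_pos (F 1 Im 0 - Im)). lra. }
  destruct (Derive_bounded_on_segment om Im Ip Hom ltac:(lra)) as (L & HL & HomL).
  set (eta := Rmin (delta / 4) ((I2 - a) / 2)).
  assert (Heta : 0 < eta /\ eta <= delta / 4 /\ a + eta < I2)
    by (unfold eta, Rmin; destruct Rle_dec; lra).
  assert (Hincr : om a < om (a + eta)).
  { apply (incr_function_le om Im Ip (Derive om)); simpl; try lra.
    - intros x _ _. apply Derive_correct, Hom.
    - intros x Hx1 Hx2. apply Hom_pos. lra. }
  destruct (resonant_point om g a (a + eta) (f a)) as (N & b & n0 & Hb & Hres); [lra | exact Hincr | |].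
  { intros x Hx. split; [apply ex_derive_continuity_pt, Hom|].
    apply ex_derive_continuity_pt, Hg. lra. }
  destruct (margin_radius Im Ip b (Rmin (delta / 4) (1 / 2)) ltac:(lra)) as (rho & Hrho & Hrho_le & Hlo & Hhi).
  { apply Rmin_pos; lra. }
  pose proof (Rmin_l (delta / 4) (1 / 2)). pose proof (Rmin_r (delta / 4) (1 / 2)).
  set (d := rho / (2 * (1 + L)) ^ N).
  assert (Hd : 0 < d) by (apply Rdiv_lt_0_compat; [lra | apply pow_lt; lra]).
  exists (d / (C + 1)). split; [apply Rdiv_lt_0_compat; lra|].
  exists N, b. split; [lra|]. exists d. split; [exact Hd|].
  intros e [He He0] y Hy.
  assert (Hce : C * e <= d).
  { apply Rlt_div_r in He0; [nra | lra]. }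
  assert (Hd_rho : d <= rho).
  { assert (HK : 1 <= (2 * (1 + L)) ^ N) by (apply pow_R1_Rle; lra).
    assert (d * (2 * (1 + L)) ^ N = rho) by (unfold d; field; lra). nra. }
  destruct (HT e He) as (HF & HG & _).
  destruct (citer_covers_cyl_ball Im Ip L (C * e) om (F e) (G e) (fun x => proj1 (Hom x)) HomL
              (C1_plane_partials _ HF) (C1_plane_partials _ HG) ltac:(nra) ltac:(lra) HL
              (Hclose e He) b rho N (g b) y Hrho Hlo Hhi Hce Hy) as (z & k & Hz & Hz1 & Hz2 & Horbit).
  exists z, 0%Z. split; [|split].
  - apply (coords_in_cyl_ball _ _ _ (n0 + k)); [exact Hdelta| |]; simpl;
      rewrite ?plus_IZR; apply Rabs_le_between; apply Rabs_le_between in Hz1;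
      apply Rabs_le_between in Hz2; lra.
  - intros j Hj. apply Horbit. lia.
  - rewrite Hz, Rplus_0_r. destruct y; reflexivity.
Qed.
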